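(* Let $R=K[x_1,\ldots,x_n]$ over a field $K$, let $I\subset R$ be a square-free monomial ideal, $\mathfrak{p}\subset R$ a monomial prime ideal, and let $\{u_1,\ldots,u_{\beta_1(I)}\}\subseteq\mathcal{G}(I)$ be an independent set of maximum cardinality $\beta_1(I)$. Suppose that for some positive integer $s$ we have $\mathfrak{p}\setminus x_i\notin\mathrm{Ass}(R/(I\setminus x_i)^s)$ for every variable $x_i$ dividing $\prod_{j=1}^{\beta_1(I)}u_j$. If $\mathfrak{p}\in\mathrm{Ass}(R/I^s)$, then $s\geq\beta_1(I)+1$.
   Context: $\mathcal{G}(I)$ is the minimal monomial generating set of $I$. A subset $\Gamma\subseteq\mathcal{G}(I)$ is independent if $\gcd(f,g)=1$ for all distinct $f,g\in\Gamma$; $\beta_1(I)$ is the maximum cardinality of an independent set in $I$. The deletion $I\setminus x_i$ is the monomial ideal generated by those $u\in\mathcal{G}(I)$ with $x_i\nmid u$; for a monomial prime $\mathfrak{p}$, $\mathfrak{p}\setminus x_i$ is generated by the variables of $\mathfrak{p}$ other than $x_i$. *)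

From mathcomp Require Import all_boot all_algebra.
From mathcomp Require Import mpoly.

Set Implicit Arguments.
Unset Strict Implicit.
Unset Printing Implicit Defensive.

Import GRing.Theory.
Local Open Scope ring_scope.

Section Defs.
Variables (K : fieldType) (n : nat).

Definition ideal_of := {mpoly K[n]} -> Prop.

Definition ideal_gen (P : ideal_of) : ideal_of := fun f =>
  exists l : seq ({mpoly K[n]} * {mpoly K[n]}),
    (forall p, p \in l -> P p.2) /\ f = \sum_(p <- l) p.1 * p.2.

Definition ideal_pow (J : ideal_of) (s : nat) : ideal_of :=
  ideal_gen (fun f => exists fs : s.-tuple {mpoly K[n]},
                (forall g, g \in fs -> J g) /\ f = \prod_(g <- fs) g).

Definition sqf_mono (S : {set 'I_n}) : {mpoly K[n]} := \prod_(i in S) 'X_i.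

(* The square-free monomial ideal with generating set G (each generator
   x^S is recorded by its support S). *)
Definition sqf_ideal (G : {set {set 'I_n}}) : ideal_of :=
  ideal_gen (fun f => exists2 S, S \in G & f = sqf_mono S).

Definition minimal_gens (G : {set {set 'I_n}}) : bool :=
  [forall S in G, forall T in G, (S \subset T) ==> (S == T)].

(* Gamma is independent: gcd(x^S, x^T) = 1, i.e. S and T disjoint,
   for distinct S, T in Gamma. *)
Definition independent (Gamma : {set {set 'I_n}}) : bool :=
  [forall S in Gamma, forall T in Gamma, (S != T) ==> [disjoint S & T]].

Definition beta1 (G : {set {set 'I_n}}) : nat :=
  \max_(Gamma : {set {set 'I_n}} | (Gamma \subset G) && independent Gamma)
     #|Gamma|.

(* Deletion I \ x_i: generators of G(I) not divisible by x_i. *)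
Definition del_gens (G : {set {set 'I_n}}) (i : 'I_n) : {set {set 'I_n}} :=
  [set S in G | i \notin S].

Definition mono_prime (P : {set 'I_n}) : ideal_of :=
  ideal_gen (fun f => exists2 i, i \in P & f = 'X_i).

Definition prime_ideal (Q : ideal_of) : Prop :=
  [/\ Q 0,
      (forall f g, Q f -> Q g -> Q (f + g)),
      (forall r f, Q f -> Q (r * f)),
      ~ Q 1 &
      (forall f g, Q (f * g) -> Q f \/ Q g)].

(* Q in Ass(R/J): Q is a prime ideal equal to (J : f) = Ann(f + J)
   for some f in R. *)
Definition in_Ass (J Q : ideal_of) : Prop :=
  prime_ideal Q /\ exists f : {mpoly K[n]}, forall g, Q g <-> J (g * f).

End Defs.

Arguments sqf_ideal K {n} G _.
Arguments mono_prime K {n} P _.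

From mathcomp Require Import all_boot all_algebra.
From mathcomp Require Import mpoly.
From Stdlib Require Import Classical.

(* Since I^s is a monomial ideal, an associated monomial prime p = (I^s : f) is
   already a colon (I^s : x^m) by a single monomial: on monomials, (I^s : f) is the
   intersection of the finitely many colons by the monomials of f, and a prime
   equal to a finite intersection equals one of them.  If a variable x_i occurring
   in some u_j did not divide x^m, then p \ x_i = ((I \ x_i)^s : x^m), contrary to
   the hypothesis.  Hence the square-free product u_1 ... u_beta divides x^m, and
   if s <= beta then x^m lies in I^s, so the colon would be the unit ideal. *)

Set Implicit Arguments.
Unset Strict Implicit.
Unset Printing Implicit Defensive.

Import GRing.Theory.
Local Open Scope ring_scope.

Section IdealGen.
Variables (K : fieldType) (n : nat).
Local Notation R := {mpoly K[n]}.
Implicit Types (Gen : ideal_of K n) (D : pred 'X_{1..n}).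

Lemma ideal_gen0 Gen : ideal_gen Gen 0.
Proof. by exists [::]; rewrite big_nil. Qed.

Lemma ideal_genD Gen f g :
  ideal_gen Gen f -> ideal_gen Gen g -> ideal_gen Gen (f + g).
Proof.
case=> l1 [H1 ->] [l2 [H2 ->]]; exists (l1 ++ l2); rewrite big_cat; split=> //.
by move=> p; rewrite mem_cat => /orP[/H1|/H2].
Qed.

Lemma ideal_genM Gen r f : ideal_gen Gen f -> ideal_gen Gen (r * f).
Proof.
case=> l [H ->]; exists [seq (r * p.1, p.2) | p <- l]; split.
  by move=> p /mapP[q /H ? ->].
by rewrite big_map mulr_sumr; apply: eq_bigr => p _; rewrite mulrA.
Qed.

Lemma ideal_gen_gen Gen g : Gen g -> ideal_gen Gen g.
Proof.
move=> Gg; exists [:: (1, g)]; rewrite big_seq1 mul1r; split=> // p.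
by rewrite mem_seq1 => /eqP ->.
Qed.

Lemma ideal_gen_sum Gen (T : Type) (r : seq T) (F : T -> R) :
  (forall x, ideal_gen Gen (F x)) -> ideal_gen Gen (\sum_(x <- r) F x).
Proof.
move=> GF; elim: r => [|x r IH]; first by rewrite big_nil; apply: ideal_gen0.
by rewrite big_cons; apply: ideal_genD.
Qed.

Definition mnm_upclosed D := forall m m', D m -> D (m + m')%MM.

Lemma ideal_gen_msuppE Gen D : mnm_upclosed D ->
  (forall g, Gen g -> all D (msupp g)) ->
  (forall m, D m -> ideal_gen Gen 'X_[m]) ->
  forall f : R, ideal_gen Gen f <-> all D (msupp f).
Proof.
move=> upD GD DX f; split.
  case=> l [Gl ->]; apply/allP => m.
  elim: l Gl => [|p l IH] Gl; first by rewrite big_nil msupp0.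
  rewrite big_cons => /msuppD_le; rewrite mem_cat => /orP[|]; last first.
    by apply: IH => q ql; apply: Gl; rewrite inE ql orbT.
  move/msuppM_le => /allpairsP [[m1 m2] /= [_ m2p ->]].
  rewrite addmC; apply: upD.
  by have /allP := GD _ (Gl p (mem_head _ _)); apply.
move=> /allP Df; rewrite (mpolyE f); apply: ideal_gen_sum => m.
have [mf|mNf] := boolP (m \in msupp f); last first.
  by rewrite (memN_msupp_eq0 mNf) scale0r; apply: ideal_gen0.
by rewrite -mul_mpolyC; apply/ideal_genM/DX/Df.
Qed.

End IdealGen.

Section MonomialIdeals.
Variables (K : fieldType) (n : nat).
Local Notation R := {mpoly K[n]}.
Implicit Types (P S : {set 'I_n}) (G : {set {set 'I_n}}) (m w : 'X_{1..n}).

Definition meets P m := [exists k in P, (0 < m k)%N].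

Lemma meetsD P m1 m2 : meets P (m1 + m2)%MM = meets P m1 || meets P m2.
Proof.
apply/existsP/orP.
  by case=> k /andP[kP]; rewrite mnmDE addn_gt0 => /orP[] k_gt0; [left|right];
    apply/existsP; exists k; rewrite kP.
by case=> /existsP[k /andP[kP k_gt0]]; exists k;
  rewrite kP mnmDE addn_gt0 k_gt0 ?orbT.
Qed.

Lemma meets0 P : meets P 0%MM = false.
Proof. by apply/existsP => -[k]; rewrite mnm0E andbF. Qed.

Lemma mono_primeE P (f : R) : mono_prime K P f <-> all (meets P) (msupp f).
Proof.
apply: ideal_gen_msuppE.
- by move=> m m' Pm; rewrite meetsD Pm.
- by move=> g [i iP ->]; rewrite msuppX /= andbT; apply/existsP; exists i;
    rewrite iP mnm1E eqxx.
- move=> m /existsP[k /andP[kP mk_gt0]].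
  rewrite -(submK (_ : U_(k) <= m)%MM) ?lep1mP -?lt0n // mpolyXD.
  by apply/ideal_genM/ideal_gen_gen; exists k.
Qed.

Definition mnm_of_set S : 'X_{1..n} := [multinom ((i \in S) : nat) | i < n].

Lemma sqf_monoE S : sqf_mono K S = 'X_[mnm_of_set S].
Proof.
rewrite /sqf_mono mpolyXE_id [RHS](bigID (mem S)) /=.
rewrite [X in _ * X]big1 ?mulr1; last by move=> i /negbTE iNS; rewrite mnmE iNS.
by apply: eq_bigr => i iS; rewrite mnmE iS expr1.
Qed.

Definition gen_divides G m := [exists S in G, mnm_of_set S <= m]%MM.

Lemma sqf_idealE G (f : R) : sqf_ideal K G f <-> all (gen_divides G) (msupp f).
Proof.
apply: ideal_gen_msuppE.
- move=> m m' /existsP[S /andP[SG Sm]]; apply/existsP; exists S.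
  by rewrite SG (lepm_trans Sm) ?lem_addr.
- by move=> g [S SG ->]; rewrite sqf_monoE msuppX /= andbT; apply/existsP;
    exists S; rewrite SG lepm_refl.
- move=> m /existsP[S /andP[SG Sm]].
  rewrite -(submK Sm) mpolyXD; apply/ideal_genM/ideal_gen_gen.
  by exists S; rewrite // sqf_monoE.
Qed.

Definition mnm_sum (t : seq {set 'I_n}) := (\sum_(S <- t) mnm_of_set S)%MM.

Lemma mnm_sumE t k : mnm_sum t k = count (fun S => k \in S) t.
Proof.
elim: t => [|S t IH]; first by rewrite /mnm_sum big_nil mnm0E.
by rewrite /mnm_sum big_cons mnmDE -/(mnm_sum t) IH mnmE.
Qed.

Definition pow_divides G s m :=
  [exists t : s.-tuple {set 'I_n}, all (mem G) t && (mnm_sum t <= m)%MM].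

Lemma pow_dividesP G s m :
  reflect (exists2 t, size t = s & all (mem G) t && (mnm_sum t <= m)%MM)
          (pow_divides G s m).
Proof.
apply: (iffP existsP) => [[t tP]|[t st tP]]; first by exists t; rewrite ?size_tuple.
have st' : size t == s by rewrite st.
by exists (Tuple st').
Qed.

Lemma pow_divides_upclosed G s : mnm_upclosed (pow_divides G s).
Proof.
move=> m m' /pow_dividesP[t st /andP[tG tm]]; apply/pow_dividesP; exists t => //.
by rewrite tG (lepm_trans tm) ?lem_addr.
Qed.

Lemma pow_dividesS G s m1 m2 :
  gen_divides G m1 -> pow_divides G s m2 -> pow_divides G s.+1 (m1 + m2)%MM.
Proof.
move=> /existsP[S /andP[SG Sm1]] /pow_dividesP[t st /andP[tG tm2]].
apply/pow_dividesP; exists (S :: t); first by rewrite /= st.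
rewrite /= SG tG /mnm_sum big_cons; apply/mnm_lepP => k; rewrite !mnmDE.
by apply: leq_add; apply/mnm_lepP.
Qed.

Lemma msupp_prod_pow_divides G (l : seq R) :
  (forall g, g \in l -> all (gen_divides G) (msupp g)) ->
  all (pow_divides G (size l)) (msupp (\prod_(g <- l) g)).
Proof.
elim: l => [|g l IH] Gl; apply/allP => m.
  rewrite big_nil msupp1 mem_seq1 => /eqP ->.
  by apply/pow_dividesP; exists [::]; rewrite // /mnm_sum big_nil lepm_refl.
rewrite big_cons => /msuppM_le /allpairsP [[m1 m2] /= [m1g m2l ->]].
apply: pow_dividesS; first by move/allP: (Gl g (mem_head _ _)); apply.
by move/allP: (IH (fun h hl => Gl h (@mem_behead _ (g :: l) _ hl))); apply.
Qed.

Lemma ideal_pow_sqfE G s (f : R) :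
  ideal_pow (sqf_ideal K G) s f <-> all (pow_divides G s) (msupp f).
Proof.
apply: ideal_gen_msuppE; first exact: pow_divides_upclosed.
  move=> g [fs [fsG ->]]; rewrite -{1}(size_tuple fs).
  by apply: msupp_prod_pow_divides => h /fsG /sqf_idealE.
move=> m /pow_dividesP[t st /andP[tG tm]].
rewrite -(submK tm) mpolyXD; apply/ideal_genM/ideal_gen_gen.
have st' : size t == s by rewrite st.
exists (map_tuple (@sqf_mono K n) (Tuple st')); split.
  move=> g /mapP[T Tt ->]; apply: ideal_gen_gen; exists T => //.
  by move/allP: tG; apply.
by rewrite big_map /mnm_sum -mprodXE; apply: eq_bigr => S _; rewrite sqf_monoE.
Qed.

End MonomialIdeals.

Section MonomialPrime.
Variables (K : fieldType) (n : nat) (P : {set 'I_n}).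
Local Notation R := {mpoly K[n]}.

(* The monomial prime generated by P is the kernel of x_i := 0 for i in P. *)
Definition kill_vars : n.-tuple R := [tuple if i \in P then 0 else 'X_i | i < n].

Lemma kill_varsX m : 'X_[m] \mPo kill_vars = if meets P m then 0 else 'X_[m].
Proof.
rewrite comp_mpolyX; case: ifP => [/existsP[k /andP[kP mk_gt0]]|mNP].
  rewrite (bigD1 k) //= tnth_mktuple kP expr0n.
  by rewrite eqn0Ngt mk_gt0 mul0r.
rewrite mpolyXE_id; apply: eq_bigr => i _; rewrite tnth_mktuple.
case: ifP => // iP; have /eqP -> : m i == 0%N.
  apply: contraFT mNP; rewrite -lt0n => mi_gt0.
  by apply/existsP; exists i; rewrite iP.
by rewrite !expr0.
Qed.

Lemma mcoeff_kill_vars (f : R) m :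
  (f \mPo kill_vars)@_m = if meets P m then 0 else f@_m.
Proof.
elim/mpolyind: f => [|c m' p _ _ IH].
  by rewrite comp_mpoly0 mcoeff0; case: ifP.
rewrite comp_mpolyD comp_mpolyZ kill_varsX !mcoeffD IH !mcoeffZ.
by case: ifP => Pm'; rewrite ?mcoeff0 mcoeffX; case: eqP => [<-|_];
  rewrite ?Pm' /= ?mulr0 ?mulr1 ?add0r ?addr0.
Qed.

Lemma mono_prime_kernel (f : R) : mono_prime K P f <-> f \mPo kill_vars = 0.
Proof.
rewrite mono_primeE; split => [/allP fP|f0].
  apply/mpolyP => m; rewrite mcoeff_kill_vars mcoeff0; case: ifP => // mNP.
  by apply/memN_msupp_eq0; apply: contraFN mNP => /fP.
apply/allP => m; apply: contraTT => mNP; rewrite mcoeff_msupp negbK.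
by have := mcoeff_kill_vars f m; rewrite (negbTE mNP) f0 mcoeff0 => <-.
Qed.

Lemma mono_prime_prime : prime_ideal (mono_prime K P).
Proof.
split.
- exact: ideal_gen0.
- exact: ideal_genD.
- exact: ideal_genM.
- by rewrite mono_primeE msupp1 /= meets0.
move=> f g; rewrite !mono_prime_kernel rmorphM /=.
by move/eqP; rewrite mulf_eq0 => /orP[] /eqP; [left|right].
Qed.

End MonomialPrime.

Section PrimeColon.
Variables (n : nat) (h D : pred 'X_{1..n}).
Hypotheses (upD : mnm_upclosed D) (h0 : ~~ h 0%MM)
  (h_prime : forall a b, h (a + b)%MM -> h a || h b).

Lemma common_nonmember (r : seq 'X_{1..n}) :
  (forall m, m \in r -> exists2 w, ~~ h w & D (w + m)%MM) ->
  exists2 W, ~~ h W & all (fun m => D (W + m)%MM) r.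
Proof.
elim: r => [|m r IH] witness; first by exists 0%MM.
have [w hNw Dwm] := witness m (mem_head _ _).
have [W hNW DW] := IH (fun m' m'r => witness m' (@mem_behead _ (m :: r) _ m'r)).
exists (w + W)%MM; first by apply: contra hNw => /h_prime; rewrite (negbTE hNW) orbF.
apply/andP; split; first by rewrite -addmA [(W + m)%MM]addmC addmA; apply: upD.
by apply/allP => m' m'r; rewrite -addmA addmC; apply/upD/(allP DW).
Qed.

(* [h] is a prime on monomials equal to the intersection of the colons
   (D : x^m), m in r; prime avoidance makes it equal to one of them. *)
Lemma prime_colon_monomial (r : seq 'X_{1..n}) :
  (forall w, h w = all (fun m => D (w + m)%MM) r) ->
  exists m0, forall w, h w = D (w + m0)%MM.
Proof.
move=> hr; apply: NNPP => no_m0.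
have [|W hNW DW] := common_nonmember (r := r); last by rewrite hr DW in hNW.
move=> m mr; apply: NNPP => no_w; apply: no_m0; exists m => w.
apply/idP/idP => [hw|Dwm]; first by move: (hr w); rewrite hw => /esym/allP; apply.
by apply: contraT => hNw; case: no_w; exists w.
Qed.

End PrimeColon.

Section Deletion.
Variable n : nat.
Implicit Types (P : {set 'I_n}) (G : {set {set 'I_n}}) (m : 'X_{1..n}).

Definition mnm_del (i : 'I_n) m := [multinom if k == i then 0%N else m k | k < n].

Lemma mnm_delD i m1 m2 : mnm_del i (m1 + m2) = (mnm_del i m1 + mnm_del i m2)%MM.
Proof. by apply/mnmP => k; rewrite !(mnmE, mnmDE); case: eqP. Qed.

Lemma mnm_del_id i m : m i = 0%N -> mnm_del i m = m.
Proof. by move=> mi0; apply/mnmP => k; rewrite mnmE; case: eqP => // ->. Qed.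

Lemma lem_del i m1 m2 :
  (m1 <= mnm_del i m2)%MM = (m1 i == 0%N) && (m1 <= m2)%MM.
Proof.
apply/mnm_lepP/andP => [le_m1|[/eqP m1i0 /mnm_lepP le_m1]] => [|k].
  split; first by have := le_m1 i; rewrite mnmE eqxx leqn0.
  by apply/mnm_lepP => k; apply: leq_trans (le_m1 k) _; rewrite mnmE; case: eqP.
by rewrite mnmE; case: eqP => [->|]; rewrite ?m1i0.
Qed.

Lemma meets_setD1 P i m : meets (P :\ i) m = meets P (mnm_del i m).
Proof.
apply/existsP/existsP => -[k]; [rewrite in_setD1 -andbA|]; case/andP.
  by move=> ki /andP[kP mk_gt0]; exists k; rewrite kP mnmE (negbTE ki).
by move=> kP; rewrite mnmE; case: eqP => // /eqP ki mk_gt0; exists k;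
  rewrite in_setD1 ki kP.
Qed.

Lemma all_del_gens G i (t : seq {set 'I_n}) :
  all (mem (del_gens G i)) t = all (mem G) t && (mnm_sum t i == 0%N).
Proof.
rewrite mnm_sumE -leqn0 leqNgt -has_count -all_predC -all_predI.
by apply: eq_all => S; rewrite /= inE.
Qed.

Lemma pow_divides_del G s i m :
  pow_divides (del_gens G i) s m = pow_divides G s (mnm_del i m).
Proof.
by apply/pow_dividesP/pow_dividesP => -[t st tP]; exists t => //; move: tP;
  rewrite all_del_gens lem_del !andbA.
Qed.

End Deletion.

Section AssociatedMonomialPrimes.
Variables (K : fieldType) (n : nat).
Variables (G : {set {set 'I_n}}) (P : {set 'I_n}) (s : nat).
Local Notation R := {mpoly K[n]}.

Lemma all_msuppMX (b : pred 'X_{1..n}) (g : R) m :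
  all b (msupp (g * 'X_[m])) = all (fun w => b (m + w)%MM) (msupp g).
Proof. by rewrite (perm_all _ (msuppMX g m)) all_map. Qed.

Lemma in_Ass_colon :
  in_Ass (ideal_pow (sqf_ideal K G) s) (mono_prime K P) ->
  exists m0, forall w, meets P w = pow_divides G s (w + m0)%MM.
Proof.
case=> _ [f Pf].
have meets_prime a b : meets P (a + b)%MM -> meets P a || meets P b.
  by rewrite meetsD.
apply: (@prime_colon_monomial _ _ _ (@pow_divides_upclosed _ G s)
          (negbT (meets0 _)) meets_prime (msupp f)) => w.
have := Pf 'X_[w].
rewrite mono_primeE ideal_pow_sqfE msuppX /= andbT mulrC all_msuppMX.
by case=> PX XP; apply/idP/idP.
Qed.

Lemma in_Ass_of_colon m0 :
  (forall w, meets P w = pow_divides G s (w + m0)%MM) ->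
  in_Ass (ideal_pow (sqf_ideal K G) s) (mono_prime K P).
Proof.
move=> colon; split; first exact: mono_prime_prime.
exists 'X_[m0] => g; rewrite mono_primeE ideal_pow_sqfE all_msuppMX.
by under eq_all => w do rewrite colon addmC.
Qed.

End AssociatedMonomialPrimes.

Lemma count_mem_independent n (U : {set {set 'I_n}}) (t : seq {set 'I_n})
    (k : 'I_n) :
  independent U -> uniq t -> {subset t <= U} ->
  (count (fun S : {set 'I_n} => k \in S) t <= 1)%N.
Proof.
move=> indU; elim: t => [|S t IH] //= /andP[St ut] tU.
have [kS|_] /= := boolP (k \in S); last first.
  by apply: IH => // T Tt; apply: tU; rewrite inE Tt orbT.
rewrite add1n ltnS leqNgt -has_count; apply/hasPn => T Tt.
have ST : S != T by apply: contraNneq St => ->.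
move/forall_inP: indU => /(_ S (tU S (mem_head _ _))).
move/forall_inP => /(_ T (tU T (@mem_behead _ (S :: t) _ Tt))) /implyP /(_ ST).
by move/disjointFr => /(_ _ kS) ->.
Qed.

Lemma mnm_sum_independent n (U : {set {set 'I_n}}) (t : seq {set 'I_n})
    (m : 'X_{1..n}) :
  independent U -> uniq t -> {subset t <= U} ->
  (forall k, k \in \bigcup_(S in U) S -> 0 < m k)%N -> (mnm_sum t <= m)%MM.
Proof.
move=> indU ut tU m_pos; apply/mnm_lepP => k; rewrite mnm_sumE.
have [kU|kNU] := boolP (k \in \bigcup_(S in U) S).
  exact: leq_trans (count_mem_independent k indU ut tU) (m_pos k kU).
rewrite (_ : count _ t = 0%N) //; apply/eqP; rewrite -leqn0 leqNgt -has_count.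
apply/hasPn => S St; apply: contra kNU.
by move=> kS; apply/bigcupP; exists S => //; apply: tU.
Qed.

Theorem corollary2p3 (K : fieldType) (n : nat)
    (G : {set {set 'I_n}}) (P : {set 'I_n})
    (U : {set {set 'I_n}}) (s : nat) :
  minimal_gens G ->
  U \subset G -> independent U -> #|U| = beta1 G ->
  (0 < s)%N ->
  (forall i : 'I_n, i \in \bigcup_(S in U) S ->
     ~ in_Ass (ideal_pow (sqf_ideal K (del_gens G i)) s)
              (mono_prime K (P :\ i))) ->
  in_Ass (ideal_pow (sqf_ideal K G) s) (mono_prime K P) ->
  (beta1 G + 1 <= s)%N.
Proof.
move=> _ UG indU <- _ del_notAss AssP; rewrite addn1 ltnNge; apply/negP => sU.
have [m0 colon] := in_Ass_colon AssP.
have m0_pos k : k \in \bigcup_(S in U) S -> (0 < m0 k)%N.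
  move=> kU; rewrite lt0n; apply/eqP => m0k; apply: (del_notAss k kU).
  apply: (@in_Ass_of_colon _ _ _ _ _ m0) => w.
  by rewrite meets_setD1 pow_divides_del mnm_delD (mnm_del_id m0k) -colon.
suff : pow_divides G s m0 by rewrite -(add0m m0) -colon meets0.
apply/pow_dividesP; exists (take s (enum U)); first by rewrite size_takel -?cardE.
have tU : {subset take s (enum U) <= U} by move=> S /mem_take; rewrite mem_enum.
apply/andP; split; first by apply/allP => S /tU /(subsetP UG).
by apply: mnm_sum_independent m0_pos; rewrite ?take_uniq ?enum_uniq.
Qed.
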